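(* For every $n\ge 1$ and every $2$-colouring of the edges of $Q_n$, there is a monochromatic geodesic of length $\lceil n/2\rceil$.
   Context: The hypercube $Q_n$ has vertex set $\{0,1\}^n$, two vertices adjacent iff they differ in exactly one coordinate; the direction of an edge is that coordinate. A path is a geodesic if no two of its edges have the same direction; length is the number of edges. A path is monochromatic if all its edges receive the same colour. *)

From mathcomp Require Import all_boot.
Set Implicit Arguments. Unset Strict Implicit. Unset Printing Implicit Defensive.

Definition vertex (n : nat) := {ffun 'I_n -> bool}.

Definition hdist n (x y : vertex n) : nat := #|[set i | x i != y i]|.

Definition adj n (x y : vertex n) : bool := hdist x y == 1.

Definition edge_dir n (x y : vertex n) (i : 'I_n) : bool := x i != y i.

(* A 2-colouring of the edges of Q_n: a colour for each (unordered) edge,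
   represented as a symmetric function on pairs of vertices (values on
   non-adjacent pairs are irrelevant). *)
Definition edge_colouring n (c : vertex n -> vertex n -> bool) : Prop :=
  forall x y, adj x y -> c x y = c y x.

(* A path x0 :: p with consecutive vertices adjacent. Its length is size p. *)
Definition is_path n (x0 : vertex n) (p : seq (vertex n)) : bool :=
  path (@adj n) x0 p.

Definition edges n (x0 : vertex n) (p : seq (vertex n)) :=
  zip (x0 :: p) p.

Definition geodesic n (x0 : vertex n) (p : seq (vertex n)) : Prop :=
  forall k l (i : 'I_n), k < l < size p ->
    edge_dir (nth x0 (x0 :: p) k) (nth x0 p k) i ->
    ~~ edge_dir (nth x0 (x0 :: p) l) (nth x0 p l) i.

Definition monochromatic n (c : vertex n -> vertex n -> bool)
    (x0 : vertex n) (p : seq (vertex n)) : Prop :=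
  exists col : bool, all (fun e => c e.1 e.2 == col) (edges x0 p).

(* From a vertex v, scan the directions 1, ..., n once, crossing the edge in
   direction d whenever it has colour col: this greedy walk is a monochromatic
   geodesic.  The map "cross the edge in direction d if it has colour col" is
   an involution of the vertex set (the colouring is symmetric), so summing
   the lengths of the two greedy walks (col = true, false) over all starting
   vertices v, each direction contributes exactly 2^n: the total is n 2^n.
   Hence for some v the two walks have total length at least n, and one of
   them has length at least ceil(n/2). *)

From mathcomp Require Import all_boot zify.
Set Implicit Arguments. Unset Strict Implicit. Unset Printing Implicit Defensive.

Section Walks.

Variable n : nat.
Implicit Types (v : vertex n) (d : 'I_n) (ds : seq 'I_n).

Definition flip v d : vertex n := [ffun j => if j == d then ~~ v j else v j].

Lemma flipK d : involutive (flip^~ d).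
Proof. by move=> v; apply/ffunP => j; rewrite !ffunE; case: eqP; rewrite ?negbK. Qed.

Lemma adj_flip v d : adj v (flip v d).
Proof.
rewrite /adj /hdist; have -> : [set i | v i != flip v d i] = [set d].
  by apply/setP => j; rewrite !inE ffunE; case: (j == d); case: (v j).
by rewrite cards1.
Qed.

Lemma edge_dir_flip v d i : edge_dir v (flip v d) i = (i == d).
Proof. by rewrite /edge_dir ffunE; case: (i == d); case: (v i). Qed.

Definition walk v ds : seq (vertex n) := scanl flip v ds.

Lemma size_walk v ds : size (walk v ds) = size ds.
Proof. exact: size_scanl. Qed.

Lemma path_walk v ds : is_path v (walk v ds).
Proof. by elim: ds v => //= d ds IH v; rewrite adj_flip IH. Qed.

Lemma edge_dir_walk v ds (x0 : vertex n) d0 k i : k < size ds ->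
  edge_dir (nth x0 (v :: walk v ds) k) (nth x0 (walk v ds) k) i = (i == nth d0 ds k).
Proof.
elim: ds v k => [|d ds IH] v [|k] //= k_lt; [exact: edge_dir_flip | exact: IH].
Qed.

Lemma geodesic_walk v ds : uniq ds -> geodesic v (walk v ds).
Proof.
move=> uniq_ds k l i /andP[lt_kl]; rewrite size_walk => lt_l.
have lt_k := ltn_trans lt_kl lt_l.
rewrite !(edge_dir_walk _ _ i) // => /eqP dir_k; apply/negP => /eqP dir_l.
by have /eqP := etrans (esym dir_k) dir_l; rewrite nth_uniq // (ltn_eqF lt_kl).
Qed.

Lemma edges_walk_take v ds m :
  edges v (walk v (take m ds)) = take m (edges v (walk v ds)).
Proof. by elim: ds v m => [|d ds IH] v [|m] //=; rewrite -IH. Qed.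

Variable c : vertex n -> vertex n -> bool.

Definition coloured col (e : vertex n * vertex n) := c e.1 e.2 == col.

Fixpoint greedy col v ds : seq 'I_n :=
  if ds is d :: ds' then
    if c v (flip v d) == col then d :: greedy col (flip v d) ds'
    else greedy col v ds'
  else [::].

Definition greedy_step col d v := if c v (flip v d) == col then flip v d else v.

Lemma subseq_greedy col v ds : subseq (greedy col v ds) ds.
Proof.
elim: ds v => //= d ds IH v; case: ifP => _; first by rewrite eqxx.
exact: subseq_trans (IH v) (subseq_cons ds d).
Qed.

Lemma greedy_coloured col v ds : all (coloured col) (edges v (walk v (greedy col v ds))).
Proof.
elim: ds v => //= d ds IH v; case: ifP => // col_d.
by rewrite /= /coloured col_d IH.
Qed.

Lemma greedy_take_coloured col v ds m :
  all (coloured col) (edges v (walk v (take m (greedy col v ds)))).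
Proof.
rewrite edges_walk_take; move: (greedy_coloured col v ds).
by rewrite -{1}(cat_take_drop m (edges _ _)) all_cat => /andP[].
Qed.

Lemma size_greedy_cons col v d ds :
  size (greedy col v (d :: ds)) =
  (c v (flip v d) == col) + size (greedy col (greedy_step col d v) ds).
Proof. by rewrite /= /greedy_step; case: ifP. Qed.

Hypothesis c_sym : edge_colouring c.

Lemma greedy_stepK col d : involutive (greedy_step col d).
Proof.
move=> v; rewrite /greedy_step; case col_d: (c v (flip v d) == col); rewrite ?col_d //.
by rewrite flipK -(c_sym (adj_flip v d)) col_d.
Qed.

Lemma sum_size_greedy col ds :
  \sum_v size (greedy col v ds) = \sum_(d <- ds) \sum_v (c v (flip v d) == col).
Proof.
elim: ds => [|d ds IH]; first by rewrite big_nil big1.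
rewrite big_cons -IH; under eq_bigr do rewrite size_greedy_cons.
rewrite big_split /=; congr (_ + _).
by rewrite [RHS](reindex_inj (inv_inj (greedy_stepK col d))).
Qed.

Lemma sum_size_greedy_both ds :
  \sum_v (size (greedy true v ds) + size (greedy false v ds)) = size ds * #|vertex n|.
Proof.
rewrite big_split /= !sum_size_greedy -big_split /=.
rewrite mulnC -iter_addn_0 -count_predT -big_const_seq.
apply: eq_bigr => d _; rewrite -big_split /= -sum1_card.
by apply: eq_bigr => v _; case: (c v _).
Qed.

End Walks.

Lemma exists_ge_average (T : finType) (f : T -> nat) K :
  0 < #|T| -> \sum_x f x = K * #|T| -> exists x, K <= f x.
Proof.
move=> T_gt0 sum_f; case: (pickP (fun x => K <= f x)) => [x | f_lt]; first by exists x.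
have : \sum_x (f x + 1) <= \sum_(x : T) K.
  by apply: leq_sum => x _; rewrite addn1 ltnNge f_lt.
rewrite big_split /= sum1_card sum_f sum_nat_const.
by have -> : #|(fun _ : T => true)| = #|T| by []; lia.
Qed.

Lemma uphalf_le_addn m a b : m <= a + b -> uphalf m <= a \/ uphalf m <= b.
Proof. by rewrite uphalf_half; have := odd_double_half m; lia. Qed.

Theorem corollary10 (n : nat) (c : vertex n -> vertex n -> bool) :
  1 <= n -> edge_colouring c ->
  exists (x0 : vertex n) (p : seq (vertex n)),
    [/\ is_path x0 p, geodesic x0 p, monochromatic c x0 p
      & size p = uphalf n].
Proof.
(* The argument needs no lower bound on n. *)
move=> _ c_sym; set ds := enum 'I_n.
have [v long_v] : exists v : vertex n,
    n <= size (greedy c true v ds) + size (greedy c false v ds).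
  apply: exists_ge_average; first by apply/card_gt0P; exists [ffun=> false].
  by rewrite sum_size_greedy_both // size_enum_ord.
have [col long_col] : exists col, uphalf n <= size (greedy c col v ds).
  by case: (uphalf_le_addn long_v) => ?; [exists true | exists false].
exists v, (walk v (take (uphalf n) (greedy c col v ds))); split.
- exact: path_walk.
- apply/geodesic_walk/take_uniq.
  exact: subseq_uniq (subseq_greedy c col v ds) (enum_uniq _).
- by exists col; apply: greedy_take_coloured.
- by rewrite size_walk size_takel.
Qed.
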